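(* Let $r\geq 2$ and let $A$ be a complex $r$-matrix of order $n_1\times\cdots\times n_r$, with slices $A^{(k)}_s$ ($k\in[r]$, $s\in[n_k]$). Then \[ \|A\|_r^r\leq \max_{a_{i_1,\ldots,i_r}\neq 0}\,|A^{(1)}_{i_1}|_1\cdots|A^{(r)}_{i_r}|_1 , \] where the maximum is over all index tuples $(i_1,\ldots,i_r)\in[n_1]\times\cdots\times[n_r]$ with $a_{i_1,\ldots,i_r}\neq 0$.
   Context: An $r$-matrix $A$ of order $n_1\times\cdots\times n_r$ is a function on $[n_1]\times\cdots\times[n_r]$, with values $a_{i_1,\ldots,i_r}$. For $k\in[r]$ and $s\in[n_k]$, the slice $A^{(k)}_s$ is the $(r-1)$-matrix obtained from $A$ by fixing $i_k=s$; $|A^{(k)}_s|_1$ denotes the sum of the absolute values of its entries. The linear form of $A$ is $L_A(\mathbf{x}^{(1)},\ldots,\mathbf{x}^{(r)})=\sum_{i_1,\ldots,i_r}a_{i_1,\ldots,i_r}\overline{x^{(1)}_{i_1}}\cdots\overline{x^{(r)}_{i_r}}$ for $\mathbf{x}^{(k)}\in\mathbb{C}^{n_k}$. For real $p\geq1$, the spectral $p$-norm is $\|A\|_p=\max\{|L_A(\mathbf{x}^{(1)},\ldots,\mathbf{x}^{(r)})| : |\mathbf{x}^{(1)}|_p=\cdots=|\mathbf{x}^{(r)}|_p=1\}$, where $|\cdot|_p$ is the usual $\ell^p$ norm of a complex vector. *)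

From HB Require Import structures.
From mathcomp Require Import all_boot all_order all_algebra.
From mathcomp Require Import all_classical all_reals all_analysis.
From mathcomp Require Import complex.
Set Implicit Arguments. Unset Strict Implicit. Unset Printing Implicit Defensive.
Import Order.TTheory GRing.Theory Num.Theory.
Local Open Scope ring_scope.
Local Open Scope classical_set_scope.

Definition tidx (r : nat) (n : 'I_r -> nat) := {dffun forall k : 'I_r, 'I_(n k)}.

Definition rmatrix (R : realType) (r : nat) (n : 'I_r -> nat) := tidx n -> R[i].

Definition cabs (R : realType) (z : R[i]) : R := Normc.normc z.

Definition slice_norm1 (R : realType) r (n : 'I_r -> nat) (A : rmatrix R n)
  (k : 'I_r) (s : 'I_(n k)) : R :=
  \sum_(i : tidx n | i k == s) cabs (A i).

Definition lpnorm (R : realType) (p : R) m (x : 'I_m -> R[i]) : R :=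
  (\sum_(j < m) cabs (x j) `^ p) `^ p^-1.

Definition linform (R : realType) r (n : 'I_r -> nat) (A : rmatrix R n)
  (x : forall k : 'I_r, 'I_(n k) -> R[i]) : R[i] :=
  \sum_(i : tidx n) A i * \prod_(k < r) conjc (x k (i k)).

(* spectral p-norm: max (here sup) of |L_A| over unit vectors in l^p *)
Definition spec_norm (R : realType) (p : R) r (n : 'I_r -> nat) (A : rmatrix R n) : R :=
  sup [set y : R | exists x : forall k : 'I_r, 'I_(n k) -> R[i],
        (forall k, lpnorm p (x k) = 1) /\ y = cabs (linform A x)].

Arguments slice_norm1 {R r n} A k s.
Arguments lpnorm {R} p {m} x.
Arguments linform {R r n} A x.
Arguments spec_norm {R} p {r n} A.

(** For an index tuple [i] with [a_i <> 0] write [w_k := |A^(k)_(i_k)|_1], so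
    that [|a_i| <= w_k] for every [k] and [w_1 ... w_r <= M], the right-hand
    side.  Hence [|a_i| <= M^(1/r) * prod_k (|a_i| / w_k)^(1/r)], and by
    AM-GM each term of the linear form satisfies
    [|a_i| prod_k |x_k(i_k)| <= M^(1/r) / r * sum_k |a_i| / w_k * |x_k(i_k)|^r].
    Summing over [i], the weights [|a_i| / w_k] add up to at most [1] along
    every slice, so for unit vectors in [l^r] the total is at most
    [M^(1/r) / r * r = M^(1/r)]. *)
From HB Require Import structures.
From mathcomp Require Import all_boot all_order all_algebra.
From mathcomp Require Import all_classical all_reals all_analysis.
From mathcomp Require Import complex.
Set Implicit Arguments. Unset Strict Implicit. Unset Printing Implicit Defensive.
Import Order.TTheory GRing.Theory Num.Theory.
Local Open Scope ring_scope.

Section ComplexModulus.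
Variable R : realType.

Lemma cabs_ge0 (z : R[i]) : 0 <= cabs z.
Proof. by case: z => a b; rewrite /cabs /Normc.normc sqrtr_ge0. Qed.

Lemma cabs_gt0 (z : R[i]) : z != 0 -> 0 < cabs z.
Proof.
move=> z_neq0; rewrite lt_def cabs_ge0 andbT.
by apply: contraNneq z_neq0 => /Normc.eq0_normc ->.
Qed.

Lemma cabs_conj (z : R[i]) : cabs (conjc z) = cabs z.
Proof. by case: z => a b; rewrite /cabs /Normc.normc /= sqrrN. Qed.

Lemma cabsM (z w : R[i]) : cabs (z * w) = cabs z * cabs w.
Proof. exact: Normc.normcM. Qed.

Lemma cabs_prod (I : Type) (s : seq I) (F : I -> R[i]) :
  cabs (\prod_(i <- s) F i) = \prod_(i <- s) cabs (F i).
Proof. by elim/big_rec2: _ => [|i y z _ <-]; rewrite ?cabsM // /cabs Normc.normc1. Qed.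

Lemma ler_cabs_sum (I : Type) (s : seq I) (P : pred I) (F : I -> R[i]) :
  cabs (\sum_(i <- s | P i) F i) <= \sum_(i <- s | P i) cabs (F i).
Proof.
elim/big_rec2: _ => [|i y z _ Hz]; first by rewrite /cabs Normc.normc0.
exact: le_trans (le_normcD _ _) (lerD _ Hz).
Qed.

End ComplexModulus.

Section RealRoots.
Variable R : realType.

Lemma prodr_powR (I : Type) (s : seq I) (F : I -> R) (e : R) :
  (forall i, 0 <= F i) -> \prod_(i <- s) F i `^ e = (\prod_(i <- s) F i) `^ e.
Proof.
move=> F_ge0; elim: s => [|a s IH]; first by rewrite !big_nil powR1.
by rewrite !big_cons IH powRM // prodr_ge0.
Qed.

Variables (r : nat) (r_gt0 : (0 < r)%N).

Let natr_neq0 : r%:R != 0 :> R.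
Proof. by rewrite pnatr_eq0 -lt0n. Qed.

Lemma exprn_powRV (t : R) : 0 <= t -> (t `^ r%:R^-1) ^+ r = t.
Proof. by move=> t_ge0; rewrite -powR_mulrn ?powR_ge0 // -powRrM mulVf ?powRr1. Qed.

Lemma powRV_exprn (t : R) : 0 <= t -> (t ^+ r) `^ r%:R^-1 = t.
Proof. by move=> t_ge0; rewrite -powR_mulrn // -powRrM mulfV ?powRr1. Qed.

Lemma AGM_exprn (g : 'I_r -> R) : (forall k, 0 <= g k) ->
  \prod_(k < r) g k <= (\sum_(k < r) g k ^+ r) / r%:R.
Proof.
move=> g_ge0.
have AGM := @leif_AGM R _ predT (fun k => g k ^+ r) (fun k _ => exprn_ge0 r (g_ge0 k)).
rewrite -(ler_pXn2r r_gt0) ?nnegrE ?prodr_ge0 ?divr_ge0 ?sumr_ge0 //.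
  by rewrite -prodrXl; move: AGM.1; rewrite card_ord.
by move=> k _; apply: exprn_ge0.
Qed.

Lemma lpnorm_natr m (x : 'I_m -> R[i]) :
  lpnorm r%:R x ^+ r = \sum_(j < m) cabs (x j) ^+ r.
Proof.
rewrite /lpnorm exprn_powRV ?sumr_ge0 //; last by move=> j _; rewrite powR_ge0.
by apply: eq_bigr => j _; rewrite powR_mulrn // cabs_ge0.
Qed.

End RealRoots.

Section SpectralNorm.
Variables (R : realType) (r : nat) (n : 'I_r -> nat) (A : rmatrix R n).

Lemma spec_norm_bounded (p B : R) : 0 <= B ->
  (forall x, (forall k, lpnorm p (x k) = 1) -> cabs (linform A x) <= B) ->
  0 <= spec_norm p A <= B.
Proof.
move=> B_ge0 ubB; rewrite /spec_norm; set S := (X in sup X).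
have [[y Sy]|S0] := pselect (S !=set0)%classic; last first.
  rewrite (_ : S = set0) ?sup0 ?lexx //.
  by apply/seteqP; split=> // y Sy; apply: S0; exists y.
have S_ub : ubound S B by move=> _ [x [/ubB + ->]].
apply/andP; split; last by apply: ge_sup S_ub; exists y.
have y_ge0 : 0 <= y by have [x [_ ->]] := Sy; apply: cabs_ge0.
by apply: le_trans y_ge0 (ub_le_sup _ Sy); exists B.
Qed.

End SpectralNorm.

Definition max_slice_prod (R : realType) r (n : 'I_r -> nat) (A : rmatrix R n) : R :=
  \big[Num.max/0]_(i : tidx n | A i != 0) \prod_(k < r) slice_norm1 A k (i k).
Arguments max_slice_prod {R r n} A.

Section SliceBound.
Variables (R : realType) (r : nat) (n : 'I_r -> nat) (A : rmatrix R n).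
Hypothesis r_gt0 : (0 < r)%N.

Local Notation M := (max_slice_prod A).
Local Notation w := (slice_norm1 A).

Lemma slice_norm1_ge0 k s : 0 <= w k s.
Proof. by apply: sumr_ge0 => i _; apply: cabs_ge0. Qed.

Lemma cabs_le_slice_norm1 (i : tidx n) k : cabs (A i) <= w k (i k).
Proof. by rewrite /slice_norm1 (bigD1 i) //= lerDl sumr_ge0 // => j _; apply: cabs_ge0. Qed.

Lemma max_slice_prod_ge0 : 0 <= M.
Proof. exact: bigmax_ge_id. Qed.

Lemma slice_weight_ge0 (i : tidx n) k : 0 <= cabs (A i) / w k (i k).
Proof. by rewrite divr_ge0 ?cabs_ge0 ?slice_norm1_ge0. Qed.

Lemma exprn_cabs_le_max_slice_prod (i : tidx n) :
  cabs (A i) ^+ r <= M * \prod_(k < r) (cabs (A i) / w k (i k)).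
Proof.
have [->|Ai_neq0] := eqVneq (A i) 0.
  rewrite /cabs Normc.normc0 expr0n gtn_eqF // mulr_ge0 ?max_slice_prod_ge0 //.
  by apply: prodr_ge0 => k _; rewrite mul0r.
have c_gt0 := cabs_gt0 Ai_neq0.
have W_gt0 : 0 < \prod_(k < r) w k (i k).
  by apply: prodr_gt0 => k _; apply: lt_le_trans c_gt0 (cabs_le_slice_norm1 i k).
have W_le : \prod_(k < r) w k (i k) <= M by apply: le_bigmax_cond.
rewrite big_split /= prodr_const card_ord prodfV mulrCA.
by rewrite ler_peMr ?exprn_ge0 ?cabs_ge0 // ler_pdivlMr // mul1r.
Qed.

Lemma cabs_le_max_slice_prod (i : tidx n) :
  cabs (A i) <= M `^ r%:R^-1 * \prod_(k < r) (cabs (A i) / w k (i k)) `^ r%:R^-1.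
Proof.
rewrite prodr_powR; last exact: slice_weight_ge0.
rewrite -powRM ?max_slice_prod_ge0 ?prodr_ge0 //; last by move=> k _; apply: slice_weight_ge0.
rewrite -{1}(powRV_exprn r_gt0 (cabs_ge0 (A i))).
apply: ge0_ler_powR; rewrite ?nnegrE ?invr_ge0 ?ler0n ?exprn_ge0 ?cabs_ge0 //.
  by rewrite mulr_ge0 ?max_slice_prod_ge0 ?prodr_ge0 // => k _; apply: slice_weight_ge0.
exact: exprn_cabs_le_max_slice_prod.
Qed.

Lemma sum_slice_weights_le k (f : 'I_(n k) -> R) : (forall s, 0 <= f s) ->
  \sum_(i : tidx n) cabs (A i) / w k (i k) * f (i k) <= \sum_(s < n k) f s.
Proof.
move=> f_ge0; rewrite (partition_big (fun i : tidx n => i k) predT) //=.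
apply: ler_sum => s _.
rewrite (eq_bigr (fun i => cabs (A i) * ((w k s)^-1 * f s))); last first.
  by move=> i /eqP ->; rewrite mulrA.
rewrite -mulr_suml mulrA.
have -> : \sum_(i : tidx n | true && (i k == s)) cabs (A i) = w k s by [].
have [->|w_neq0] := eqVneq (w k s) 0; first by rewrite !mul0r f_ge0.
by rewrite divff // mul1r.
Qed.

Lemma cabs_linform_le (x : forall k : 'I_r, 'I_(n k) -> R[i]) :
  (forall k, \sum_(s < n k) cabs (x k s) ^+ r = 1) ->
  cabs (linform A x) <= M `^ r%:R^-1.
Proof.
move=> x_unit.
pose g (i : tidx n) k := (cabs (A i) / w k (i k)) `^ r%:R^-1 * cabs (x k (i k)).
have triangle : cabs (linform A x) <= \sum_i cabs (A i) * \prod_(k < r) cabs (x k (i k)).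
  apply: le_trans (ler_cabs_sum _ _ _) (ler_sum _ _) => i _.
  by rewrite cabsM cabs_prod (eq_bigr _ (fun k _ => cabs_conj _)).
have term_le i : cabs (A i) * \prod_(k < r) cabs (x k (i k)) <= M `^ r%:R^-1 * \prod_k g i k.
  rewrite /g big_split /= mulrA ler_wpM2r ?cabs_le_max_slice_prod //.
  by rewrite prodr_ge0 // => k _; apply: cabs_ge0.
have AGM i : \prod_k g i k <=
    (\sum_(k < r) cabs (A i) / w k (i k) * cabs (x k (i k)) ^+ r) / r%:R.
  apply: le_trans (AGM_exprn r_gt0 _) _ => [k|]; first by rewrite mulr_ge0 ?powR_ge0 ?cabs_ge0.
  rewrite ler_wpM2r ?invr_ge0 ?ler0n //; apply: ler_sum => k _.
  by rewrite /g exprMn exprn_powRV ?slice_weight_ge0.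
apply: le_trans triangle (le_trans (ler_sum _ (fun i _ => term_le i)) _).
rewrite -mulr_sumr -[leRHS]mulr1 ler_wpM2l ?powR_ge0 //.
apply: le_trans (ler_sum _ (fun i _ => AGM i)) _.
rewrite -mulr_suml exchange_big /= ler_pdivrMr ?ltr0n // mul1r.
have slice_le k : \sum_i cabs (A i) / w k (i k) * cabs (x k (i k)) ^+ r <= 1.
  by rewrite -(x_unit k) sum_slice_weights_le // => s; rewrite exprn_ge0 ?cabs_ge0.
by apply: le_trans (ler_sum _ (fun k _ => slice_le k)) _; rewrite sumr_const card_ord.
Qed.

End SliceBound.

Theorem theorem1 (R : realType) (r : nat) (n : 'I_r -> nat) (A : rmatrix R n) :
  (2 <= r)%N ->
  spec_norm (r%:R) A ^+ r <=
    \big[Num.max/0]_(i : tidx n | A i != 0)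
       \prod_(k < r) slice_norm1 A k (i k).
Proof.
move=> /ltnW r_gt0; have M_ge0 := max_slice_prod_ge0 A.
have /andP[norm_ge0 norm_le] : 0 <= spec_norm r%:R A <= max_slice_prod A `^ r%:R^-1.
  apply: spec_norm_bounded => [|x x_unit]; first exact: powR_ge0.
  apply: cabs_linform_le => // k.
  by rewrite -lpnorm_natr // x_unit expr1n.
by rewrite -/(max_slice_prod A) -(exprn_powRV r_gt0 M_ge0) ler_pXn2r ?nnegrE ?powR_ge0 ?norm_ge0.
Qed.
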